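(* Let $n$ be even, $e_1,\dots,e_n$ the standard basis of $\mathbb{R}^n$ and $e_0=e_1+\dots+e_n$. Consider the complete flags $F_0=F(e_0,e_1,\dots,e_{n-1})$, $F_1=F(e_1,e_2,\dots,e_n)$ and $F_i=F(e_i,e_{i+1},\dots,e_n,e_0,\dots,e_{i-1})$ for $2\le i\le n$. If $b:(\mathcal{F}(\mathbb{R}^n))^n\to\mathbb{R}$ is any map satisfying $b(gF'_1,\dots,gF'_n)=\operatorname{sign}(\det g)\,b(F'_1,\dots,F'_n)$ for all $g\in\mathrm{GL}_n(\mathbb{Z})$ and all flags, then $db(F_0,\dots,F_n)=0$.
   Context: $\mathcal{F}(\mathbb{R}^n)$ is the set of complete flags in $\mathbb{R}^n$. For a basis $(w_1,\dots,w_n)$, $F(w_1,\dots,w_n)$ denotes the flag $\{0\}\subset\langle w_1\rangle\subset\langle w_1,w_2\rangle\subset\dots\subset\langle w_1,\dots,w_n\rangle=\mathbb{R}^n$. The coboundary is $db(F_0,\dots,F_n)=\sum_{i=0}^n(-1)^ib(F_0,\dots,\widehat{F_i},\dots,F_n)$. *)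

(* The real line R^n is modelled over an arbitrary
   realFieldType R (the statement is purely algebraic). *)
From HB Require Import structures.
From mathcomp Require Import all_boot all_order all_algebra.
Set Implicit Arguments. Unset Strict Implicit. Unset Printing Implicit Defensive.
Import Order.TTheory GRing.Theory Num.Theory.
Local Open Scope ring_scope.

Section Flags.
Variables (R : realFieldType) (n : nat).

Definition chain := {ffun 'I_n.+1 -> {vspace 'rV[R]_n}}.

Definition is_flag (c : chain) : bool :=
  [forall i : 'I_n.+1, \dim (c i) == i] &&
  [forall i : 'I_n, (c (inord i) <= c (inord i.+1))%VS].

Definition flag_of (s : seq 'rV[R]_n) : chain :=
  [ffun k : 'I_n.+1 => <<take k s>>%VS].

(* standard basis e_1..e_n (e_k = k-th unit vector, k >= 1), e_0 = e_1+...+e_n *)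
Definition ev (k : nat) : 'rV[R]_n :=
  \row_(j < n) (if k == 0%N then 1 else (k == j.+1)%:R).

Definition Fseq (i : nat) : seq 'rV[R]_n :=
  if i == 0%N then [seq ev k | k <- iota 0 n]
  else if i == 1%N then [seq ev k | k <- iota 1 n]
  else [seq ev k | k <- iota i (n.+1 - i) ++ iota 0 i].

Definition Fflag (i : 'I_n.+1) : chain := flag_of (Fseq i).

(* action of g in GL_n(Z) on R^n (v |-> g v, with v written as a row) *)
Definition act_vec (g : 'M[int]_n) (v : 'rV[R]_n) : 'rV[R]_n :=
  v *m (map_mx intr g)^T.

Definition act_chain (g : 'M[int]_n) (c : chain) : chain :=
  [ffun k => <<map (act_vec g) (vbasis (c k))>>%VS].

Definition cobound (b : {ffun 'I_n -> chain} -> R) (F : {ffun 'I_n.+1 -> chain}) : R :=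
  \sum_(i < n.+1) (-1) ^+ i * b [ffun j => F (lift i j)].

End Flags.

(* Every term of the coboundary vanishes separately. The matrix diag(1, ..., 1, -1)
   has determinant -1, fixes e_1, ..., e_(n-1), negates e_n and sends e_0 to
   e_0 - 2 e_n; since e_n precedes e_0 in each F_j with j >= 1, it fixes every such
   flag. Conjugating it by powers of the signed cyclic shift
   e_0 -> -e_1, e_k -> e_(k+1), e_n -> -e_0, which maps F_j to F_(j+1) (indices mod
   n+1), yields for each i an orientation-reversing g fixing all F_j with j <> i.
   Equivariance then gives b(..., F_i omitted, ...) = - b(..., F_i omitted, ...). *)

From HB Require Import structures.
From mathcomp Require Import all_boot all_order all_algebra.
Set Implicit Arguments. Unset Strict Implicit. Unset Printing Implicit Defensive.
Import Order.TTheory GRing.Theory Num.Theory.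
Local Open Scope ring_scope.

Lemma sum_ord_eq_mul (T : pzSemiRingType) k a (F : nat -> T) :
  \sum_(l < k) ((l == a :> nat)%:R * F l) = if (a < k)%N then F a else 0.
Proof.
case: (ltnP a k) => [ak | ka].
  rewrite (bigD1 (Ordinal ak)) //= eqxx mul1r big1 ?addr0 // => l neq_la.
  by rewrite -[(l == a :> nat)]/(l == Ordinal ak) (negbTE neq_la) mul0r.
by apply: big1 => l _; rewrite ltn_eqF ?mul0r // (leq_trans (ltn_ord l) ka).
Qed.

Lemma sum_ord_eqS_mul (T : pzSemiRingType) k a (F : nat -> T) :
  \sum_(l < k) ((l.+1 == a :> nat)%:R * F l) = if (0 < a <= k)%N then F a.-1 else 0.
Proof.
case: a => [|a]; first by apply: big1 => l _; rewrite mul0r.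
by under eq_bigr => l _ do rewrite eqSS; rewrite sum_ord_eq_mul.
Qed.

Lemma span_map_scale (K : fieldType) (V : vectType K) (I : eqType)
    (a : I -> K) (f : I -> V) s :
  (forall i, a i != 0) -> <<[seq a i *: f i | i <- s]>>%VS = <<map f s>>%VS.
Proof.
move=> a_neq0; apply/eqP; rewrite eqEsubv; apply/andP.
split; apply/span_subvP => _ /mapP [i s_i ->]; last rewrite -[f i](scalerK (a_neq0 i)).
  by apply/memvZ/memv_span/map_f.
by apply/memvZ/memv_span/(map_f (fun i => a i *: f i)).
Qed.

Section Action.
Variables (R : realFieldType) (n : nat).
Implicit Types (g h : 'M[int]_n) (c : chain R n) (s : seq 'rV[R]_n).

Definition act_lfun g : 'End('rV[R]_n) := linfun (mulmxr (map_mx intr g)^T).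

Lemma act_lfunE g v : act_lfun g v = act_vec g v.
Proof. by rewrite lfunE. Qed.

Lemma act_lfunM g h : act_lfun (g *m h) = (act_lfun g \o act_lfun h)%VF.
Proof.
by apply/lfunP => v; rewrite comp_lfunE !act_lfunE /act_vec map_mxM trmx_mul mulmxA.
Qed.

Lemma act_lfun1 : act_lfun 1%:M = \1%VF.
Proof. by apply/lfunP => v; rewrite id_lfunE act_lfunE /act_vec map_mx1 trmx1 mulmx1. Qed.

Lemma act_vec_entry (g : 'M[int]_n) (v : 'rV[R]_n) i :
  act_vec g v 0 i = \sum_j v 0 j * (g i j)%:~R.
Proof. by rewrite !mxE; apply: eq_bigr => j _; rewrite !mxE. Qed.

Lemma act_chainE g c k : act_chain g c k = (act_lfun g @: c k)%VS.
Proof.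
rewrite ffunE -[in RHS](span_basis (vbasisP (c k))) limg_span.
by congr span; apply: eq_map => v; rewrite act_lfunE.
Qed.

Lemma act_chainM g h c : act_chain (g *m h) c = act_chain g (act_chain h c).
Proof. by apply/ffunP => k; rewrite !act_chainE act_lfunM limg_comp. Qed.

Lemma act_chain1 c : act_chain 1%:M c = c.
Proof. by apply/ffunP => k; rewrite act_chainE act_lfun1 lim1g. Qed.

Lemma act_chain_flag_of g s : act_chain g (flag_of s) = flag_of (map (act_vec g) s).
Proof.
apply/ffunP => k; rewrite act_chainE !ffunE limg_span map_take.
by congr (span (take _ _)); apply: eq_map => v; rewrite act_lfunE.
Qed.

Lemma dim_act_lfun g h (U : {vspace 'rV[R]_n}) :
  h *m g = 1%:M -> \dim (act_lfun g @: U) = \dim U.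
Proof.
move=> hg; have dim_limg_leq f (W : {vspace 'rV[R]_n}) : (\dim (f @: W) <= \dim W)%N.
  by rewrite -(limg_ker_dim f W) leq_addl.
apply/eqP; rewrite eqn_leq dim_limg_leq.
by rewrite -{1}[U]lim1g -act_lfun1 -hg act_lfunM limg_comp dim_limg_leq.
Qed.

Lemma act_chain_flag g h c : h *m g = 1%:M -> is_flag c -> is_flag (act_chain g c).
Proof.
move=> hg /andP [/forallP dim_c /forallP incr_c]; apply/andP; split; apply/forallP => i.
  by rewrite act_chainE (dim_act_lfun _ hg).
by rewrite !act_chainE limgS.
Qed.

Lemma act_chain_fixed g h c : h *m g = 1%:M ->
  (forall k, act_lfun g @: c k <= c k)%VS -> act_chain g c = c.
Proof.
move=> hg stable; apply/ffunP => k; rewrite act_chainE.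
suff /eqP : (act_lfun g @: c k == c k)%VS by [].
by rewrite eqEdim stable (dim_act_lfun _ hg) /=.
Qed.

Lemma flag_of_take s : flag_of (take n s) = flag_of s.
Proof. by apply/ffunP => k; rewrite !ffunE take_takel // -ltnS. Qed.

Lemma flag_of_scale (I : eqType) (a : I -> R) (f : I -> 'rV[R]_n) (t : seq I) :
  (forall i, a i != 0) -> flag_of [seq a i *: f i | i <- t] = flag_of (map f t).
Proof. by move=> a_neq0; apply/ffunP => k; rewrite !ffunE -!map_take span_map_scale. Qed.

Lemma flag_of_flag s : size s = n -> <<s>>%VS = fullv -> is_flag (flag_of s).
Proof.
move=> size_s span_s; apply/andP; split; apply/forallP => i; rewrite !ffunE; last first.
  rewrite !inordK ?ltnS ?(ltnW (ltn_ord i)) //.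
  by apply: sub_span => v; rewrite -(take_takel s (leqnSn i)); apply: mem_take.
have le_in : (i <= n)%N by rewrite -ltnS.
rewrite eqn_leq (leq_trans (dim_span _)) ?size_take_min ?geq_minl //=.
rewrite -(leq_add2r (n - i)) subnKC //.
have {1}-> : n = \dim <<s>> by rewrite span_s dimvf dim_matrix; exact: esym (mul1n n).
rewrite -[in <<s>>%VS](cat_take_drop i s) span_cat.
rewrite (leq_trans (dimv_add_leqif _ _).1) // leq_add2l.
by rewrite (leq_trans (dim_span _)) // size_drop size_s.
Qed.

End Action.

Lemma rot_iota0 k j : (j <= k)%N -> rot j (iota 0 k) = iota j (k - j) ++ iota 0 j.
Proof. by move=> le_jk; rewrite /rot drop_iota take_iota add0n (minn_idPl le_jk). Qed.

Section StandardFlags.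
Variables (R : realFieldType) (n : nat).
Hypothesis n_gt0 : (0 < n)%N.

Local Notation ev := (ev R n).

Definition succ_mod (m : nat) : nat := if m == n then 0%N else m.+1.

Definition cyc_basis (j : nat) : seq 'rV[R]_n := map ev (rot j (iota 0 n.+1)).

Lemma Fflag_cyc (i : 'I_n.+1) : Fflag R i = flag_of (cyc_basis i).
Proof.
rewrite /Fflag -flag_of_take -(flag_of_take (cyc_basis i)) /cyc_basis /Fseq.
case: eqP => [-> | _]; first by rewrite rot0 -!map_take !take_iota minnn (minn_idPl (leqnSn n)).
rewrite rot_iota0 ?(ltnW (ltn_ord i)) //; case: eqP => [-> | _] //.
by rewrite subSS subn0 map_cat take_size_cat ?size_map ?size_iota // -map_take take_iota minnn.
Qed.

Lemma cyc_basis1 : take n (cyc_basis 1) = map ev (iota 1 n).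
Proof.
by rewrite /cyc_basis rot_iota0 // subSS subn0 map_cat take_size_cat ?size_map ?size_iota.
Qed.

Lemma succ_mod_onto j : (j <= n)%N -> exists2 m, (m <= n)%N & succ_mod m = j.
Proof.
rewrite /succ_mod; case: j => [|j] le_jn; first by exists n; rewrite ?eqxx.
by exists j; rewrite ?(ltnW le_jn) ?ltn_eqF.
Qed.

Lemma map_succ_mod_rot j : (j <= n)%N ->
  map succ_mod (rot j (iota 0 n.+1)) = rot (succ_mod j) (iota 0 n.+1).
Proof.
have succ_iota : map succ_mod (iota 0 n.+1) = rot 1 (iota 0 n.+1).
  rewrite rot_iota0 // -addn1 iotaD map_cat /= {2}/succ_mod eqxx addnK; congr (_ ++ _).
  rewrite (iotaDl 1 0); apply/eq_in_map => m; rewrite mem_iota add0n => /andP [_ lt_mn].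
  by rewrite /succ_mod ltn_eqF.
move=> le_jn; rewrite map_rot succ_iota -rotD ?size_iota ?addn1 // /succ_mod.
by case: eqP => [-> | _] //; rewrite -{1}(size_iota 0 n.+1) rot_size rot0.
Qed.

(* [cyc_mx] sends e_k to e_(k+1) for 1 <= k < n and e_n to -e_0, hence e_0 to -e_1. *)
Definition cyc_mx : 'M[int]_n :=
  \matrix_(i, j) ((i == j.+1 :> nat)%:R - (j.+1 == n)%:R).

Definition cyc_mx_inv : 'M[int]_n :=
  \matrix_(i, j) ((j == i.+1 :> nat)%:R - (j == 0 :> nat)%:R).

Lemma cyc_mx_invK : cyc_mx_inv *m cyc_mx = 1%:M.
Proof.
apply/matrixP => i j; rewrite !mxE.
under eq_bigr => l _ do rewrite !mxE mulrBl.
rewrite sumrB !(sum_ord_eq_mul _ _ (fun l => (l == j.+1)%:R - (j.+1 == n)%:R)) n_gt0.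
case: ltnP => [_ | le_ni]; first by rewrite eqSS sub0r opprK subrK.
have last_i : i.+1 = n by apply/eqP; rewrite eqn_leq le_ni ltn_ord.
by rewrite !sub0r opprK -[X in _ == X]last_i eqSS eq_sym.
Qed.

Definition cyc_sign (m : nat) : R := if (m <= 1)%N then -1 else 1.

Lemma cyc_sign_neq0 m : cyc_sign m != 0.
Proof. by rewrite /cyc_sign; case: ifP; rewrite ?oppr_eq0 oner_eq0. Qed.

Lemma cyc_mx_ev m : (m <= n)%N ->
  act_vec cyc_mx (ev m) = cyc_sign (succ_mod m) *: ev (succ_mod m).
Proof.
move=> le_mn; apply/rowP => i; rewrite act_vec_entry !mxE /succ_mod.
case: m le_mn => [|m] le_mn /=.
  rewrite [0%N == n]eq_sym (negbTE (lt0n_neq0 n_gt0)) /cyc_sign /=.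
  under eq_bigr => j _ do rewrite mxE mul1r !mxE rmorphB /= !rmorph_nat eq_sym -[_%:R]mulr1.
  rewrite sumrB (sum_ord_eqS_mul _ _ (fun=> 1)).
  under [X in _ - X]eq_bigr => j _ do rewrite -[_%:R]mulr1.
  rewrite (sum_ord_eqS_mul _ _ (fun=> 1)) n_gt0 leqnn /= (ltnW (ltn_ord i)).
  by case: (nat_of_ord i) => [|i'] /=; rewrite ?subrr ?sub0r ?mulr0 ?mulr1.
under eq_bigr => j _ do rewrite mxE /= eqSS mxE rmorphB /= !rmorph_nat [(m == _)]eq_sym.
rewrite (sum_ord_eq_mul _ _ (fun l => (((i : nat) == l.+1)%:R - (l.+1 == n)%:R))) le_mn.
case: (eqVneq m.+1 n) => [last_m | ne_mn] /=.
  by rewrite last_m (ltn_eqF (ltn_ord i)) /cyc_sign sub0r mulr1.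
by rewrite /cyc_sign /= subr0 mul1r eqSS eq_sym.
Qed.

Lemma cyc_mx_flag j : (j <= n)%N ->
  act_chain cyc_mx (flag_of (cyc_basis j)) = flag_of (cyc_basis (succ_mod j)).
Proof.
move=> le_jn; rewrite act_chain_flag_of /cyc_basis -map_succ_mod_rot // -!map_comp.
rewrite -[RHS](@flag_of_scale _ _ _ (cyc_sign \o succ_mod)) => [|m]; last exact: cyc_sign_neq0.
congr flag_of; apply/eq_in_map => m; rewrite mem_rot mem_iota => /andP [_ lt_mn].
exact: cyc_mx_ev.
Qed.

Lemma span_ev : <<map ev (iota 1 n)>>%VS = fullv.
Proof.
apply/eqP; rewrite eqEsubv subvf /=; apply/subvP => v _.
have -> : v = \sum_(j < n) v 0 j *: ev j.+1.
  apply/rowP => i; rewrite summxE (bigD1 i) //= big1 ?addr0 => [|j ne_ji].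
    by rewrite !mxE eqxx mulr1.
  by rewrite !mxE /= eqSS -[_ == _ :> nat]/(j == i) (negbTE ne_ji) mulr0.
apply: memv_suml => j _; apply/memvZ/memv_span/map_f.
by rewrite mem_iota ltnS leq0n add1n ltnS ltn_ord.
Qed.

Lemma cyc_basis_flag j : (j <= n)%N -> is_flag (flag_of (cyc_basis j)).
Proof.
have flag_succ k : (k <= n)%N -> is_flag (flag_of (cyc_basis k)) ->
    is_flag (flag_of (cyc_basis (succ_mod k))).
  by move=> le_kn flag_k; rewrite -cyc_mx_flag //; apply: act_chain_flag cyc_mx_invK flag_k.
have flag_pos k : (0 < k <= n)%N -> is_flag (flag_of (cyc_basis k)).
  elim: k => [// | [_ _ | k IH /andP [_ lt_kn]]].
    rewrite -flag_of_take cyc_basis1; apply: flag_of_flag; last exact: span_ev.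
    by rewrite size_map size_iota.
  have -> : k.+2 = succ_mod k.+1 by rewrite /succ_mod ltn_eqF.
  exact: flag_succ (ltnW lt_kn) (IH (ltnW lt_kn)).
case: j => [_ | j le_jn]; last exact: flag_pos.
have -> : 0%N = succ_mod n by rewrite /succ_mod eqxx.
by apply: flag_succ (leqnn n) _; apply: flag_pos; rewrite n_gt0 leqnn.
Qed.

Definition flip_mx : 'M[int]_n := diag_mx (\row_(i < n) if i.+1 == n then -1 else 1).

Lemma det_flip_mx : \det flip_mx = -1.
Proof.
have last_lt : (n.-1 < n)%N by rewrite prednK.
rewrite det_diag (bigD1 (Ordinal last_lt)) //= big1 => [|i ne_i]; rewrite mxE.
  by rewrite prednK // eqxx mulr1.
rewrite ifF //; apply: contraNF ne_i => /eqP last_i.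
by rewrite -val_eqE /= -(congr1 predn last_i).
Qed.

Lemma flip_mxK : flip_mx *m flip_mx = 1%:M.
Proof.
rewrite mulmx_diag; apply/matrixP => i j; rewrite !mxE.
by case: (i.+1 == n); rewrite ?mulrNN mulr1.
Qed.

Lemma act_flip_mx (v : 'rV[R]_n) i :
  act_vec flip_mx v 0 i = if i.+1 == n then - v 0 i else v 0 i.
Proof.
rewrite /act_vec map_diag_mx tr_diag_mx mul_mx_diag !mxE.
by case: (i.+1 == n); rewrite ?rmorphN1 ?mulrN1 ?mulr1.
Qed.

Lemma flip_mx_ev0 : act_vec flip_mx (ev 0) = ev 0 - 2%:R *: ev n.
Proof.
apply/rowP => i; rewrite act_flip_mx !mxE /= (negbTE (lt0n_neq0 n_gt0)) eq_sym.
by case: eqP => _; rewrite ?mulr1 ?mulr0 ?subr0 // mulr2n opprD addrA subrr add0r.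
Qed.

Lemma flip_mx_ev m : (0 < m)%N ->
  act_vec flip_mx (ev m) = (if m == n then -1 else 1) *: ev m.
Proof.
case: m => // m _; apply/rowP => i; rewrite act_flip_mx !mxE /=.
case: (eqVneq m i) => [-> | ne_mi].
  by rewrite eqxx; case: (i.+1 == n); rewrite ?mulN1r ?mul1r.
by rewrite eqSS (negbTE ne_mi) mulr0n oppr0 mulr0 if_same.
Qed.

Lemma mem_take_rot_last j k : (0 < j <= n)%N ->
  0%N \in take k (rot j (iota 0 n.+1)) -> n \in take k (rot j (iota 0 n.+1)).
Proof.
move=> /andP [j_gt0 le_jn]; rewrite rot_iota0 ?(leqW le_jn) // take_cat size_iota.
case: ltnP => [_ | le_k]; first by move/mem_take; rewrite mem_iota leqNgt j_gt0.
by move=> _; rewrite mem_cat mem_iota le_jn subnKC ?(leqW le_jn) ?ltnSn.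
Qed.

Lemma flip_mx_flag j : (0 < j <= n)%N ->
  act_chain flip_mx (flag_of (cyc_basis j)) = flag_of (cyc_basis j).
Proof.
move=> j_range; apply: act_chain_fixed flip_mxK _ => k.
rewrite ffunE /cyc_basis -map_take limg_span.
apply/span_subvP => _ /mapP [_ /mapP [m take_m ->] ->]; rewrite act_lfunE.
have in_span m' : m' \in take k (rot j (iota 0 n.+1)) ->
    ev m' \in <<map ev (take k (rot j (iota 0 n.+1)))>>%VS.
  by move=> take_m'; apply/memv_span/map_f.
case: (posnP m) => [m0 | m_gt0]; last by rewrite flip_mx_ev //; apply/memvZ/in_span.
rewrite {}m0 in take_m *; rewrite flip_mx_ev0 memvB ?in_span //.
by apply/memvZ/in_span/mem_take_rot_last.
Qed.

Lemma reflection_fixing_flags i : (i <= n)%N ->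
  exists2 g : 'M[int]_n, \det g = -1 & forall j, (j <= n)%N -> j != i ->
    act_chain g (flag_of (cyc_basis j)) = flag_of (cyc_basis j).
Proof.
elim: i => [_ | i IH lt_in].
  exists flip_mx => [|j le_jn ne_j0]; first exact: det_flip_mx.
  by apply: flip_mx_flag; rewrite lt0n ne_j0.
have [g det_g fix_g] := IH (ltnW lt_in).
exists (cyc_mx *m g *m cyc_mx_inv) => [|j le_jn ne_ji].
  by rewrite !det_mulmx det_g mulrN1 mulNr mulrC -det_mulmx cyc_mx_invK det1.
have [m le_mn succ_m] := succ_mod_onto le_jn.
have ne_mi : m != i.
  by move: ne_ji; apply: contraNneq => m_i; rewrite -succ_m m_i /succ_mod (ltn_eqF lt_in).
have unshift : act_chain cyc_mx_inv (flag_of (cyc_basis j)) = flag_of (cyc_basis m).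
  by rewrite -succ_m -cyc_mx_flag // -act_chainM cyc_mx_invK act_chain1.
by rewrite !act_chainM unshift fix_g // cyc_mx_flag // succ_m.
Qed.

End StandardFlags.

Definition sign_equivariant (R : realFieldType) n (b : {ffun 'I_n -> chain R n} -> R) :=
  forall g : 'M[int]_n, g \in unitmx ->
    forall F : {ffun 'I_n -> chain R n}, (forall k, is_flag (F k)) ->
      b [ffun k => act_chain g (F k)] = (Num.sg (\det g))%:~R * b F.

Lemma sign_equivariant_fixed_eq0 (R : realFieldType) n (b : {ffun 'I_n -> chain R n} -> R)
    (g : 'M[int]_n) (F : {ffun 'I_n -> chain R n}) :
  sign_equivariant b -> \det g = -1 -> (forall k, is_flag (F k)) ->
  (forall k, act_chain g (F k) = F k) -> b F = 0.
Proof.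
move=> equivariant det_g flag_F fix_F.
have unit_g : g \in unitmx by rewrite unitmxE det_g unitrN unitr1.
have := equivariant g unit_g F flag_F.
rewrite (_ : [ffun k => _] = F); last by apply/ffunP => k; rewrite ffunE fix_F.
rewrite det_g sgrN1 rmorphN1 mulN1r => bF_opp.
have : b F *+ 2 == 0 by rewrite mulr2n {1}bF_opp addNr.
by rewrite mulrn_eq0 => /eqP.
Qed.

Theorem lemma5p1 (R : realFieldType) (n : nat) (hn : (0 < n)%N) (heven : ~~ odd n)
  (b : {ffun 'I_n -> chain R n} -> R) :
  (forall g : 'M[int]_n, g \in unitmx ->
     forall F' : {ffun 'I_n -> chain R n}, (forall k, is_flag (F' k)) ->
       b [ffun k => act_chain g (F' k)] = (Num.sg (\det g))%:~R * b F') ->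
  cobound b [ffun i => Fflag R i] = 0.
Proof.
move=> equivariant; apply: big1 => i _.
have [g det_g fix_g] := reflection_fixing_flags R hn (leq_ord i).
rewrite (sign_equivariant_fixed_eq0 equivariant det_g) ?mulr0 // => k.
  by rewrite !ffunE Fflag_cyc cyc_basis_flag ?leq_ord.
by rewrite !ffunE Fflag_cyc fix_g ?leq_ord // eq_sym neq_lift.
Qed.
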